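(* Let $G$ be a finite simple connected graph of order at least $2$ having a minimum dominating set $D$ with $c(D)\neq \emptyset$. Then the Cartesian product $G \,\square\, H$ is not well-dominated for every finite simple connected graph $H$ of order at least $2$.
   Context: For $u\in A\subseteq V(G)$, $\mathrm{pn}[u,A]=\{x\in V(G): N[x]\cap A=\{u\}\}$; for a dominating set $D$, $c(D)=\{x\in D : \mathrm{pn}[x,D]=\{x\}\}$. A graph is well-dominated if every minimal (with respect to inclusion) dominating set is a minimum dominating set. The Cartesian product $G\,\square\, H$ has vertex set $V(G)\times V(H)$, with $(g_1,h_1)$ adjacent to $(g_2,h_2)$ iff either ($g_1=g_2$ and $h_1h_2\in E(H)$) or ($h_1=h_2$ and $g_1g_2\in E(G)$). *)

From mathcomp Require Import all_boot.
Set Implicit Arguments. Unset Strict Implicit. Unset Printing Implicit Defensive.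

Section Graphs.
Variable T : finType.
Variable e : rel T.

Definition simple_graph : Prop := symmetric e /\ irreflexive e.

Definition connected_graph : Prop := forall x y : T, connect e x y.

Definition cnbhd (x : T) : {set T} := [set y | (y == x) || e x y].

Definition dominating (D : {set T}) : Prop :=
  forall x : T, cnbhd x :&: D != set0.

Definition minimal_dominating (D : {set T}) : Prop :=
  dominating D /\ forall D' : {set T}, D' \proper D -> ~ dominating D'.

Definition minimum_dominating (D : {set T}) : Prop :=
  dominating D /\ forall D' : {set T}, dominating D' -> #|D| <= #|D'|.

Definition well_dominated : Prop :=
  forall D : {set T}, minimal_dominating D -> minimum_dominating D.

Definition pn (u : T) (A : {set T}) : {set T} :=
  [set x | cnbhd x :&: A == [set u]].

Definition cD (D : {set T}) : {set T} :=
  [set x in D | pn x D == [set x]].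
End Graphs.

Definition cartprod (T U : finType) (e : rel T) (f : rel U) : rel (T * U) :=
  fun p q => ((p.1 == q.1) && f p.2 q.2) || ((p.2 == q.2) && e p.1 q.1).

(** Since [G] has no isolated vertex, it has a minimum dominating
    set [Q] in which every vertex has an external private neighbour
    (Bollobás–Cockayne): among minimum dominating sets take one maximising the
    number of vertices that are not isolated in [G[Q]]; a vertex without an
    external private neighbour would be isolated there and could be exchanged
    for one of its neighbours, increasing that number.  Then [Q × V(H)] is a
    minimal dominating set of [G □ H], each [(p, h)] having the private
    neighbour [(w, h)].  On the other hand, if [x ∈ c(D)] and [h0 h1] is an edge
    of [H], then [D × V(H)] minus [(x, h0)] still dominates: [(x, h0)] is
    dominated by [(x, h1)], and every other vertex of the [h0]-layer is
    dominated by [D \ {x}].  It has [|D| |V(H)| - 1 = |Q| |V(H)| - 1]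
    elements, so [G □ H] has minimal dominating sets of different sizes. *)

From mathcomp Require Import all_boot.

Set Implicit Arguments. Unset Strict Implicit. Unset Printing Implicit Defensive.

Lemma setD1_eq0 (T : finType) (A : {set T}) x :
  (A :\ x == set0) = (A == [set x]) || (A == set0).
Proof. by rewrite setD_eq0 subset1. Qed.

Lemma neighbour_exists (T : finType) (e : rel T) :
  connected_graph e -> 1 < #|T| -> forall v, exists w, e v w.
Proof.
move=> conn T2 v.
have /set0Pn [y] : [set~ v] != set0 by rewrite -card_gt0 cardsC1 -subn1 subn_gt0.
rewrite !inE => yv.
case/connectP: (conn v y) => [[|w p]] /=; first by move=> _ yv0; rewrite yv0 eqxx in yv.
by case/andP=> evw _ _; exists w.
Qed.

Section Domination.
Variables (T : finType) (e : rel T).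
Hypotheses (sym : symmetric e) (irr : irreflexive e).

Lemma minimum_dominating_card D D' :
  minimum_dominating e D -> minimum_dominating e D' -> #|D| = #|D'|.
Proof. by move=> [Ddom Dmin] [D'dom D'min]; apply/eqP; rewrite eqn_leq Dmin ?D'min. Qed.

Lemma minimum_dominating_setD1 D v :
  minimum_dominating e D -> v \in D -> ~ dominating e (D :\ v).
Proof. by move=> [_ Dmin] vD /Dmin; rewrite (cardsD1 v D) vD ltnn. Qed.

Lemma private_neighbour_exists D v :
  dominating e D -> ~ dominating e (D :\ v) -> exists u, cnbhd e u :&: D = [set v].
Proof.
move=> Ddom Dvdom.
have /existsP [u] : [exists u, cnbhd e u :&: (D :\ v) == set0].
  by apply: contraT => /existsPn uD; case: (Dvdom uD).
by rewrite setIDA setD1_eq0 (negbTE (Ddom u)) orbF => /eqP; exists u.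
Qed.

Lemma minimal_dominating_private D : dominating e D ->
  (forall p, p \in D -> exists u, cnbhd e u :&: D = [set p]) ->
  minimal_dominating e D.
Proof.
move=> Ddom Dpriv; split=> // D' /properP [D'D [p pD pD']] D'dom.
have [u uD] := Dpriv p pD.
case/set0Pn: (D'dom u) => z /setIP [zu zD'].
have : z \in cnbhd e u :&: D by rewrite inE zu (subsetP D'D).
by rewrite uD => /set1P zp; rewrite -zp zD' in pD'.
Qed.

Lemma dominating_setD1_cD D x v : dominating e D -> pn e x D = [set x] ->
  v != x -> cnbhd e v :&: (D :\ x) != set0.
Proof.
move=> Ddom pnx vx; rewrite setIDA setD1_eq0 negb_or (Ddom v) andbT.
by have := vx; apply: contra => vD; rewrite -in_set1 -pnx inE.
Qed.

Definition ext_private (P : {set T}) (p : T) : bool :=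
  [exists w, (w \notin P) && (cnbhd e w :&: P == [set p])].

Definition non_isolated (P : {set T}) : {set T} :=
  [set p in P | [exists q in P, e p q]].

Lemma isolated_no_ext_private P v : minimum_dominating e P -> v \in P ->
  ~~ ext_private P v -> cnbhd e v :&: P = [set v].
Proof.
move=> Pmin vP nepv.
have [u uP] := private_neighbour_exists Pmin.1 (minimum_dominating_setD1 Pmin vP).
have uinP : u \in P.
  by apply: contraR nepv => unP; apply/existsP; exists u; rewrite unP uP eqxx.
have : u \in cnbhd e u :&: P by rewrite !inE eqxx uinP.
by rewrite uP => /set1P uv; rewrite -{1}uv.
Qed.

Lemma neighbour_isolated_notin P v w :
  cnbhd e v :&: P = [set v] -> e v w -> w \notin P.
Proof.
move=> vP evw; apply/negP => wP.
have : w \in cnbhd e v :&: P by rewrite !inE evw orbT.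
by rewrite vP => /set1P wv; rewrite wv irr in evw.
Qed.

Lemma no_ext_private_dominator P v y : ~~ ext_private P v -> y \notin P ->
  v \in cnbhd e y -> v \in P -> exists2 z, z \in cnbhd e y :&: P & z != v.
Proof.
move=> nepv yP vy vP.
have yvP : cnbhd e y :&: P != [set v].
  by apply: contraNneq nepv => yvP; apply/existsP; exists y; rewrite yP yvP eqxx.
have /set0Pn [z /setD1P [zv zyP]] : cnbhd e y :&: P :\ v != set0.
  by rewrite setD1_eq0 negb_or yvP; apply/set0Pn; exists v; rewrite in_setI vy vP.
by exists z.
Qed.

Lemma dominating_swap P v w : dominating e P -> v \in P ->
  ~~ ext_private P v -> e v w -> dominating e (w |: (P :\ v)).
Proof.
move=> Pdom vP nepv evw y; apply/set0Pn.
case/set0Pn: (Pdom y) => z /setIP [zy zP].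
have [zv | zv] := eqVneq z v; last first.
  by exists z; rewrite in_setI zy in_setU1 in_setD1 zv zP orbT.
subst z; have [-> | yv] := eqVneq y v; first by exists w; rewrite !inE eqxx evw orbT.
have [yP | yP] := boolP (y \in P); first by exists y; rewrite !inE yv yP eqxx !orbT.
have [z /setIP [zy' zP'] zv] := no_ext_private_dominator nepv yP zy vP.
by exists z; rewrite in_setI zy' in_setU1 in_setD1 zv zP' orbT.
Qed.

Lemma non_isolated_swap P v w : cnbhd e v :&: P = [set v] ->
  ~~ ext_private P v -> e v w ->
  w |: non_isolated P \subset non_isolated (w |: (P :\ v)).
Proof.
move=> vP nepv evw; have wP := neighbour_isolated_notin vP evw.
have vinP : v \in P by have := set11 v; rewrite -vP => /setIP [].
apply/subsetP => p; rewrite in_setU1 => /predU1P [-> | ].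
  have vw : v \in cnbhd e w by rewrite inE sym evw orbT.
  have [q /setIP [qw qP] qv] := no_ext_private_dominator nepv wP vw vinP.
  have ewq : e w q by move: qw; rewrite inE => /predU1P [qw | //]; rewrite -qw qP in wP.
  by rewrite !inE eqxx /=; apply/existsP; exists q; rewrite !inE qv qP ewq orbT.
rewrite inE => /andP [pP /existsP [q /andP [qP epq]]].
have pv : p != v.
  by apply: contraTneq qP => pv; apply: (neighbour_isolated_notin vP); rewrite -pv.
have qv : q != v.
  by apply: contraTneq pP => qv; apply: (neighbour_isolated_notin vP); rewrite sym -qv.
by rewrite !inE pv pP orbT; apply/existsP; exists q; rewrite !inE qv qP epq orbT.
Qed.

Hypothesis no_isolated : forall v, exists w, e v w.

Lemma exchange_no_ext_private P v : minimum_dominating e P -> v \in P ->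
  ~~ ext_private P v ->
  exists2 P', minimum_dominating e P' & #|non_isolated P| < #|non_isolated P'|.
Proof.
move=> Pmin vP nepv; have vPv := isolated_no_ext_private Pmin vP nepv.
have [w evw] := no_isolated v; have wP := neighbour_isolated_notin vPv evw.
have card_swap : #|w |: (P :\ v)| = #|P|.
  by rewrite cardsU1 in_setD1 (negbTE wP) andbF (cardsD1 v P) vP.
exists (w |: (P :\ v)).
  split=> [|D' /Pmin.2]; first exact: dominating_swap Pmin.1 vP nepv evw.
  by rewrite card_swap.
apply: leq_trans (subset_leq_card (non_isolated_swap vPv nepv evw)).
by rewrite cardsU1 inE (negbTE wP).
Qed.

Theorem minimum_dominating_ext_private D : minimum_dominating e D ->
  exists2 Q, minimum_dominating e Q & {in Q, forall p, ext_private Q p}.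
Proof.
move=> Dmin.
pose admissible Q := [forall x, cnbhd e x :&: Q != set0] && (#|Q| == #|D|).
have minimum_admissible Q : minimum_dominating e Q -> admissible Q.
  by move=> Qmin; rewrite /admissible (minimum_dominating_card Qmin Dmin) eqxx andbT;
     apply/forallP; case: Qmin.
have [Q /andP [/forallP Qdom /eqP QD] Qmax] :=
  arg_maxnP (fun Q => #|non_isolated Q|) (minimum_admissible D Dmin).
have Qmin : minimum_dominating e Q by split=> // D' /Dmin.2; rewrite QD.
exists Q => // p pQ; apply: contraT => nepp.
have [P' /minimum_admissible P'adm] := exchange_no_ext_private Qmin pQ nepp.
by have /= := Qmax P' P'adm; rewrite leqNgt => /negP.
Qed.
End Domination.

Section CartesianProduct.
Variables (T U : finType) (e : rel T) (f : rel U).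

Lemma cnbhd_cartprodl v z h :
  z \in cnbhd e v -> (z, h) \in cnbhd (cartprod e f) (v, h).
Proof.
rewrite !inE /cartprod /= xpair_eqE eqxx !andbT.
by case/predU1P => [-> | evz]; rewrite ?eqxx ?evz ?orbT.
Qed.

Lemma cnbhd_cartprodr v h k : f h k -> (v, k) \in cnbhd (cartprod e f) (v, h).
Proof. by move=> fhk; rewrite !inE /cartprod /= eqxx fhk orbT. Qed.

Lemma dominating_setX Q :
  dominating e Q -> dominating (cartprod e f) (setX Q [set: U]).
Proof.
move=> Qdom [v h]; case/set0Pn: (Qdom v) => z /setIP [zv zQ].
by apply/set0Pn; exists (z, h); rewrite in_setI cnbhd_cartprodl // in_setX zQ in_setT.
Qed.

Lemma cartprod_private (Q : {set T}) p w h :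
  w \notin Q -> cnbhd e w :&: Q = [set p] ->
  cnbhd (cartprod e f) (w, h) :&: setX Q [set: U] = [set (p, h)].
Proof.
move=> wQ wp; apply/setP => -[a b].
have := congr1 (fun A : {set T} => a \in A) wp.
rewrite !inE /cartprod /= !xpair_eqE andbT => ap.
have [aQ | aQ] := boolP (a \in Q); last first.
  by rewrite (negbTE aQ) !andbF in ap *; rewrite -ap.
have aw : a != w by apply: contraNneq wQ => <-.
rewrite aQ andbT (negbTE aw) /= in ap *.
rewrite [w == a]eq_sym (negbTE aw) /= -ap.
by rewrite andbT andbC eq_sym.
Qed.

Lemma minimal_dominating_setX Q : dominating e Q ->
  {in Q, forall p, ext_private e Q p} ->
  minimal_dominating (cartprod e f) (setX Q [set: U]).
Proof.
move=> Qdom Qepn; apply: minimal_dominating_private (dominating_setX Qdom) _.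
move=> [p h]; rewrite in_setX => /andP [pQ _].
have /existsP [w /andP [wQ /eqP wp]] := Qepn p pQ.
by exists (w, h); apply: cartprod_private.
Qed.

Lemma dominating_setX_cD D x h0 h1 : irreflexive f -> dominating e D ->
  x \in D -> pn e x D = [set x] -> f h0 h1 ->
  dominating (cartprod e f) (setX D [set: U] :\ (x, h0)).
Proof.
move=> irrf Ddom xD pnx fh01 [v h]; apply/set0Pn.
have [vx | vx] := eqVneq v x; last first.
  have /set0Pn [z /setIP [zv /setD1P [zx zD]]] := dominating_setD1_cD Ddom pnx vx.
  by exists (z, h); rewrite in_setI cnbhd_cartprodl // !inE xpair_eqE (negbTE zx) zD.
rewrite vx; have [hh0 | hh0] := eqVneq h h0.
  have h10 : h1 != h0 by apply: contraTneq fh01 => ->; rewrite irrf.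
  exists (x, h1); rewrite in_setI hh0 cnbhd_cartprodr //.
  by rewrite !inE xpair_eqE (negbTE h10) xD andbF.
by exists (x, h); rewrite in_setI !inE eqxx xpair_eqE (negbTE hh0) xD andbF.
Qed.

End CartesianProduct.

Theorem proposition18 (T : finType) (e : rel T) :
  simple_graph e -> connected_graph e -> 1 < #|T| ->
  (exists D : {set T}, minimum_dominating e D /\ cD e D != set0) ->
  forall (U : finType) (f : rel U),
    simple_graph f -> connected_graph f -> 1 < #|U| ->
    ~ well_dominated (cartprod e f).
Proof.
move=> [sym irr] conn T2 [D [Dmin /set0Pn [x]]].
rewrite inE => /andP [xD /eqP pnx] U f [_ irrf] connf U2 wd.
have [Q Qmin Qepn] :=
  minimum_dominating_ext_private sym irr (neighbour_exists conn T2) Dmin.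
have /card_gt0P [h0 _] : 0 < #|U| by apply: ltnW.
have [h1 fh01] := neighbour_exists connf U2 h0.
have [_ QUmin] := wd _ (minimal_dominating_setX f Qmin.1 Qepn).
have := QUmin _ (dominating_setX_cD irrf Dmin.1 xD pnx fh01).
rewrite cardsX (minimum_dominating_card Qmin Dmin) -cardsX.
by rewrite (cardsD1 (x, h0)) in_setX xD in_setT add1n ltnn.
Qed.
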